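(* For every $\epsilon>0$ there is $\eta>0$ such that for all sufficiently large $n$ the following holds. If $H$ is a $4$-uniform hypergraph on $n$ vertices containing no copy of ${\cal C}^{(4)}_3$ with $e(H)>b(n)-\eta n^4$, then there is a partition $V(H)=V_1\cup V_2$ such that all but at most $\epsilon n^4$ of the $4$-element subsets of $V(H)$ are correct with respect to this partition.
   Context: ${\cal C}^{(4)}_3$ is the $4$-uniform hypergraph with vertices $a,b,c,d,e,f$ and the three edges $abcd, abef, cdef$. For $n$ and $t$ with $n/2+t$ a nonnegative integer and $|t|\le n/2$, ${\cal B}(n,t)$ is the $4$-uniform hypergraph on $n$ vertices partitioned into parts of sizes $n/2+t$ and $n/2-t$ whose edges are all $4$-sets having exactly $1$ vertex in one part and $3$ in the other; $b(n)$ is the maximum over admissible $t$ of the number of edges of ${\cal B}(n,t)$. Given a partition $V(H)=V_1\cup V_2$, a $4$-set is good if it has $1$ point in one of $V_1,V_2$ and $3$ in the other, and bad otherwise; it is correct (with respect to $H$) if it is either a good edge of $H$ or a bad non-edge of $H$, and incorrect otherwise. *)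

From HB Require Import structures.
From mathcomp Require Import all_boot all_order all_algebra.
From mathcomp Require Import reals.
Set Implicit Arguments. Unset Strict Implicit. Unset Printing Implicit Defensive.

Definition uniform4 (n : nat) (E : {set {set 'I_n}}) : Prop :=
  forall e, e \in E -> #|e| = 4.

Definition contains_C3 (n : nat) (E : {set {set 'I_n}}) : Prop :=
  exists (a b c d e f : 'I_n),
    uniq [:: a; b; c; d; e; f] /\
    [set a; b; c; d] \in E /\ [set a; b; e; f] \in E /\ [set c; d; e; f] \in E.

(* Number of edges of B(n,t) with parts of sizes k = n/2 + t and n - k. *)
Definition edgesB (n k : nat) : nat := k * 'C(n - k, 3) + 'C(k, 3) * (n - k).

(* b(n): maximum over admissible t, i.e. over part sizes k = 0..n. *)
Definition bmax (n : nat) : nat := \max_(k < n.+1) edgesB n k.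

(* Partition V = V1 ∪ V2 with V2 = ~: V1; a 4-set is good if it has 1 or 3
   points in V1. *)
Definition good (n : nat) (V1 : {set 'I_n}) (S : {set 'I_n}) : bool :=
  (#|S :&: V1| == 1) || (#|S :&: V1| == 3).

Definition correct (n : nat) (E : {set {set 'I_n}}) (V1 S : {set 'I_n}) : bool :=
  ((S \in E) && good V1 S) || ((S \notin E) && ~~ good V1 S).

Definition incorrect_sets (n : nat) (E : {set {set 'I_n}}) (V1 : {set 'I_n})
  : {set {set 'I_n}} :=
  [set S : {set 'I_n} | (#|S| == 4) && ~~ correct E V1 S].

From HB Require Import structures.
From mathcomp Require Import all_boot all_order all_algebra.
From mathcomp Require Import reals.
From mathcomp Require Import zify.
From mathcomp Require Import ring lra.
Set Implicit Arguments. Unset Strict Implicit. Unset Printing Implicit Defensive.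

(* Fix a pair pq of maximal codegree and let L be its link graph, the ordered pairs ab with
   pqab an edge.  As H has no copy of C_3, no edge abcd has both ab and cd in L; call an ordered
   quadruple abcd a defect when "abcd is an edge" differs from "ab in L xor cd in L".  Comparing
   with the maximal codegree gives 2 D + 144 e(H) <= 3 (n (n - 1))^2 for the number D of
   defects, and e(H) > b(n) - eta n^4 with b(n) ~ n^4/48 makes D = O(eta n^4 + n^3).  Averaging
   yields a pair vu such that almost every quadruple vuxy has no defect among its three
   pairings; on those, membership of xy in L is read off from the L-neighbourhood of v up to a
   parity independent of x, so the partition V1 = N_L(v) makes all but O(D + n^3) of the
   4-sets correct. *)

Lemma bin3_mul6 m : 'C(m, 3) * 6 = m * (m - 1) * (m - 2).
Proof.
case: m => [|[|[|m]]] //.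
have := bin_ffact m.+3 3; rewrite !ffactnS ffactn0 /= => ->.
rewrite !subSS !subn0; lia.
Qed.

Lemma cube_le_falling3 m : m ^ 3 <= m * (m - 1) * (m - 2) + 3 * m ^ 2.
Proof.
case: m => [|[|[|m]]] //; rewrite !subSS !subn0.
have -> : m.+3 ^ 3 = m.+3 * m.+2 * m.+1 + 3 * m.+3 ^ 2 - 2 * m.+3 by nia.
lia.
Qed.

Lemma edgesB_balanced_lb a b : a <= b <= a.+1 ->
  (a + b) ^ 4 <= 48 * edgesB (a + b) a + 6 * (a + b) ^ 3 + (a + b) ^ 2.
Proof.
case/andP => hab hba.
rewrite /edgesB addKn.
have -> : 48 * (a * 'C(b, 3) + 'C(a, 3) * b)
    = 8 * (a * ('C(b, 3) * 6) + ('C(a, 3) * 6) * b) by lia.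
rewrite !bin3_mul6.
have Fb := leq_mul (leqnn a) (cube_le_falling3 b).
have Fa := leq_mul (cube_le_falling3 a) (leqnn b).
move: Fa Fb; move: (b * (b - 1) * (b - 2)) (a * (a - 1) * (a - 2)) => X Y.
have [-> | ->] : b = a \/ b = a.+1 by lia.
  by nia.
by nia.
Qed.

Lemma bmax_lb n : n ^ 4 <= 48 * bmax n + 6 * n ^ 3 + n ^ 2.
Proof.
have half_lt : n./2 < n.+1 by rewrite ltnS -divn2 leq_div.
have le_bmax : edgesB n n./2 <= bmax n.
  exact: (@leq_bigmax _ (fun k : 'I_n.+1 => edgesB n k) (Ordinal half_lt)).
have balanced : n./2 <= n - n./2 <= n./2.+1 by rewrite -divn2; lia.
have := edgesB_balanced_lb balanced.
rewrite subnKC; [lia | by rewrite -divn2 leq_div].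
Qed.

Ltac perm4 := apply/permP => P /=; lia.

Section OrderedQuadruples.
Variable n : nat.
Local Notation V := 'I_n.

Definition sum2 (G : V -> V -> nat) := \sum_(a < n) \sum_(b < n) G a b.
Definition sum4 (F : V -> V -> V -> V -> nat) := sum2 (fun a b => sum2 (F a b)).
Definition distinct4 (a b c d : V) := uniq [:: a; b; c; d].

Lemma leq_sum2 F G : (forall a b, F a b <= G a b) -> sum2 F <= sum2 G.
Proof. by move=> FG; apply: leq_sum => a _; apply: leq_sum => b _. Qed.

Lemma eq_sum2 F G : (forall a b, F a b = G a b) -> sum2 F = sum2 G.
Proof. by move=> FG; apply: eq_bigr => a _; apply: eq_bigr => b _. Qed.

Lemma sum2D F G : sum2 (fun a b => F a b + G a b) = sum2 F + sum2 G.
Proof. by rewrite /sum2 -big_split; apply: eq_bigr => a _; rewrite -big_split. Qed.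

Lemma sum2Ml k F : sum2 (fun a b => k * F a b) = k * sum2 F.
Proof. by rewrite /sum2 big_distrr; apply: eq_bigr => a _; rewrite big_distrr. Qed.

Lemma sum2_const k : sum2 (fun _ _ => k) = n * n * k.
Proof. by rewrite /sum2 !sum_nat_const !card_ord mulnA. Qed.

Lemma sum2_sum (I : finType) (P : pred I) (G : I -> V -> V -> nat) :
  sum2 (fun a b => \sum_(i | P i) G i a b) = \sum_(i | P i) sum2 (G i).
Proof.
rewrite /sum2 [RHS]exchange_big; apply: eq_bigr => a _.
by rewrite [RHS]exchange_big.
Qed.

Lemma sum2_transpose F : sum2 F = sum2 (fun a b => F b a).
Proof. exact: exchange_big. Qed.

Lemma npairsE : sum2 (fun a b => a != b) = n * (n - 1).
Proof.
rewrite /sum2 (eq_bigr (fun=> n - 1)) ?sum_nat_const ?card_ord // => a _.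
have <- : #|predC1 a| = n - 1 by rewrite cardC1 card_ord subn1.
rewrite -sum1_card [RHS]big_mkcond /=.
by apply: eq_bigr => b _; rewrite !inE eq_sym; case: (a == b).
Qed.

Lemma exists_offdiag_le_avg (H : V -> V -> nat) K :
  sum2 H <= K -> (forall v, H v v = 0) -> 1 < n ->
  exists v u, v != u /\ n * (n - 1) * H v u <= K.
Proof.
move=> sumH Hdiag n_gt1.
case: (boolP [exists v, exists u, (v != u) && (n * (n - 1) * H v u <= K)]).
  by case/existsP => v /existsP [u /andP [vu Hvu]]; exists v, u.
rewrite negb_exists => /forallP Hbig; exfalso.
have : sum2 (fun v u => K.+1 * (v != u)) <= sum2 (fun v u => n * (n - 1) * H v u).
  apply: leq_sum2 => v u.
  case: (eqVneq v u) => [->|vu]; first by rewrite muln0.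
  have := Hbig v; rewrite negb_exists => /forallP /(_ u); rewrite vu /= -ltnNge.
  by rewrite muln1.
rewrite !sum2Ml npairsE.
have : 0 < n * (n - 1) by rewrite muln_gt0; apply/andP; split; lia.
have := leq_mul (leqnn (n * (n - 1))) sumH.
move: (n * (n - 1)) => P; nia.
Qed.

Lemma leq_sum4 F G : (forall a b c d, F a b c d <= G a b c d) -> sum4 F <= sum4 G.
Proof. by move=> FG; apply: leq_sum2 => a b; apply: leq_sum2. Qed.

Lemma eq_sum4 F G : (forall a b c d, F a b c d = G a b c d) -> sum4 F = sum4 G.
Proof. by move=> FG; apply: eq_sum2 => a b; apply: eq_sum2. Qed.

Lemma sum4D F G : sum4 (fun a b c d => F a b c d + G a b c d) = sum4 F + sum4 G.
Proof. by rewrite /sum4 -sum2D; apply: eq_sum2 => a b; rewrite sum2D. Qed.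

Lemma sum4_sum (I : finType) (P : pred I) (G : I -> V -> V -> V -> V -> nat) :
  sum4 (fun a b c d => \sum_(i | P i) G i a b c d) = \sum_(i | P i) sum4 (G i).
Proof. by rewrite /sum4 -sum2_sum; apply: eq_sum2 => a b; rewrite sum2_sum. Qed.

Lemma sum4_swap F : sum4 F = sum4 (fun a b c d => F c d a b).
Proof.
rewrite /sum4 /sum2; transitivity (\sum_(a < n) \sum_(c < n) \sum_(b < n) \sum_(d < n) F a b c d).
  by apply: eq_bigr => a _; rewrite exchange_big.
rewrite exchange_big; apply: eq_bigr => c _.
transitivity (\sum_(a < n) \sum_(d < n) \sum_(b < n) F a b c d).
  by apply: eq_bigr => a _; rewrite exchange_big.
by rewrite exchange_big.
Qed.

Lemma sum4_23 F : sum4 F = sum4 (fun a b c d => F a c b d).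
Proof. by rewrite /sum4 /sum2; apply: eq_bigr => a _; rewrite exchange_big. Qed.

Lemma sum4_cyc F : sum4 F = sum4 (fun a b c d => F a d b c).
Proof.
rewrite /sum4 /sum2; apply: eq_bigr => a _.
symmetry; transitivity (\sum_(b < n) \sum_(d < n) \sum_(c < n) F a d b c).
  by apply: eq_bigr => b _; rewrite exchange_big.
by rewrite exchange_big.
Qed.

Lemma sum4_mull G H :
  sum4 (fun a b c d => G a b * H a b c d) = sum2 (fun a b => G a b * sum2 (H a b)).
Proof. by apply: eq_sum2 => a b; rewrite sum2Ml. Qed.

Lemma sum4_prod G H : sum4 (fun a b c d => G a b * H c d) = sum2 G * sum2 H.
Proof.
rewrite sum4_mull [RHS]mulnC -(sum2Ml (sum2 H) G).
by apply: eq_sum2 => a b; rewrite mulnC.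
Qed.

Lemma sum4_const2 G : sum4 (fun a b _ _ => G a b) = n * n * sum2 G.
Proof.
rewrite -sum2Ml; apply: eq_sum2 => a b.
by rewrite sum2_const mulnC.
Qed.

Lemma distinct4_perm a b c d a' b' c' d' :
  perm_eq [:: a; b; c; d] [:: a'; b'; c'; d'] -> distinct4 a b c d = distinct4 a' b' c' d'.
Proof. exact: perm_uniq. Qed.

Lemma distinct4E a b c d :
  distinct4 a b c d = [&& a != b, a != c, a != d, b != c, b != d & c != d].
Proof. by rewrite /distinct4 /= !inE !negb_or !andbT -!andbA. Qed.

Lemma distinct4_swap a b c d : distinct4 a b c d = distinct4 c d a b.
Proof. by apply: distinct4_perm; perm4. Qed.
Lemma distinct4_23 a b c d : distinct4 a b c d = distinct4 a c b d.
Proof. by apply: distinct4_perm; perm4. Qed.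
Lemma distinct4_cyc a b c d : distinct4 a b c d = distinct4 a d b c.
Proof. by apply: distinct4_perm; perm4. Qed.

Lemma distinct4_last a b c d :
  distinct4 a b c d = uniq [:: a; b; c] && (d \notin [:: a; b; c]).
Proof. by rewrite /distinct4 -(rot_uniq 3) /= andbC. Qed.

Lemma uniq6_of_distinct4 p q a b c d :
  distinct4 p q a b -> distinct4 p q c d -> distinct4 a b c d -> uniq [:: p; q; a; b; c; d].
Proof.
rewrite /= !inE !negb_or !distinct4E.
move=> /and5P [? ? ? ? /andP [? ?]] /and5P [? ? ? ? /andP [? ?]] /and5P [? ? ? ? /andP [? ?]].
by do ![apply/andP; split].
Qed.

Lemma card_set_seq (s : seq V) : uniq s -> #|[set x in s]| = size s.
Proof. by move=> Hu; rewrite cardsE; apply/card_uniqP. Qed.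

Lemma set4E (a b c d : V) : [set a; b; c; d] = [set x in [:: a; b; c; d]].
Proof. by apply/setP => x; rewrite !inE -!orbA. Qed.

Lemma card_set4I a b c d (g : pred V) : distinct4 a b c d ->
  #|[set a; b; c; d] :&: [set x | g x]| = count g [:: a; b; c; d].
Proof.
move=> abcd; have -> : [set a; b; c; d] :&: [set x | g x] = [set x in filter g [:: a; b; c; d]].
  by apply/setP => x; rewrite !inE mem_filter !inE -!orbA andbC.
by rewrite card_set_seq ?size_filter // filter_uniq.
Qed.

Lemma sum_andb_mem (X : bool) (Y : {set V}) : \sum_(c < n) (X && (c \in Y)) = X * #|Y|.
Proof.
case: X; last by rewrite big1.
by rewrite mul1n -sum1_card [RHS]big_mkcond; apply: eq_bigr => c _; case: (c \in Y).
Qed.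

Section EnumerateSet.
Variable S : {set V}.
Hypothesis cardS : #|S| = 4.

Lemma sum_enum_last a b c :
  \sum_(d < n) (distinct4 a b c d && ([set a; b; c; d] == S))
  = uniq [:: a; b; c] && (a \in S) && (b \in S) && (c \in S).
Proof.
case: (boolP (uniq [:: a; b; c] && (a \in S) && (b \in S) && (c \in S))) => H.
  case/andP: (H) => /andP [] /andP [] abc aS bS cS.
  have abcS : [set a; b; c] \subset S.
    by apply/subsetP => x; rewrite !inE -!orbA => /or3P [] /eqP ->.
  have card_abc : #|[set a; b; c]| = 3.
    rewrite -[3]/(size [:: a; b; c]) -(card_set_seq abc).
    by apply: eq_card => x; rewrite !inE -!orbA.
  have completes d : (distinct4 a b c d && ([set a; b; c; d] == S))
      = true && (d \in S :\: [set a; b; c]).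
    rewrite distinct4_last abc /= !inE -!orbA; apply/idP/idP.
      by case/andP => dabc /eqP <-; rewrite !inE eqxx !orbT andbT.
    case/andP => dabc dS; rewrite dabc /= eqEcard set4E card_set_seq; last first.
      by rewrite -/(distinct4 a b c d) distinct4_last abc /= !inE.
    rewrite cardS leqnn andbT; apply/subsetP => x; rewrite !inE -?orbA.
    by case/or4P => /eqP ->.
  under eq_bigr => d _ do rewrite completes.
  by rewrite sum_andb_mem cardsDS // cardS card_abc.
rewrite big1 // => d _; apply/eqP; rewrite eqb0; apply/negP => /andP [abcd /eqP abcdS].
move/negP: H; apply; rewrite -abcdS !inE !eqxx ?orbT /= !andbT.
by move: abcd; rewrite distinct4_last => /andP [] /= /and3P [-> -> _].
Qed.

Lemma sum_enum_third a b :
  \sum_(c < n) (uniq [:: a; b; c] && (a \in S) && (b \in S) && (c \in S))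
  = 2 * ((a != b) && (a \in S) && (b \in S)).
Proof.
have split_c c : uniq [:: a; b; c] && (a \in S) && (b \in S) && (c \in S)
   = ((a != b) && (a \in S) && (b \in S)) && (c \in S :\: [set a; b]).
  rewrite /= !inE (eq_sym c a) (eq_sym c b).
  by case: (a == b); case: (a == c); case: (b == c); case: (a \in S); case: (b \in S).
under eq_bigr => c _ do rewrite split_c.
rewrite sum_andb_mem; case: (boolP ((a != b) && (a \in S) && (b \in S))) => // /andP [] /andP [] ab aS bS.
rewrite cardsDS ?cardS ?cards2 ?ab //.
by apply/subsetP => x; rewrite !inE => /orP [] /eqP ->.
Qed.

Lemma sum_enum_second a :
  \sum_(b < n) ((a != b) && (a \in S) && (b \in S)) = 3 * (a \in S).
Proof.
have split_b b : (a != b) && (a \in S) && (b \in S) = (a \in S) && (b \in S :\: [set a]).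
  by rewrite !inE (eq_sym b a); case: (a == b); case: (a \in S).
under eq_bigr => b _ do rewrite split_b.
rewrite sum_andb_mem; case: (boolP (a \in S)) => // aS.
by rewrite cardsDS ?cardS ?cards1 // sub1set.
Qed.

Lemma sum4_enum_set : sum4 (fun a b c d => distinct4 a b c d && ([set a; b; c; d] == S)) = 24.
Proof.
rewrite /sum4 /sum2.
under eq_bigr => a _ do under eq_bigr => b _ do under eq_bigr => c _ do rewrite sum_enum_last.
under eq_bigr => a _ do under eq_bigr => b _ do rewrite sum_enum_third.
under eq_bigr => a _ do rewrite -big_distrr /= sum_enum_second.
rewrite -big_distrr /= -big_distrr /=.
suff -> : \sum_(a < n) (a \in S) = 4 by [].
by rewrite -cardS -sum1_card [RHS]big_mkcond; apply: eq_bigr => c _; case: (c \in S).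
Qed.

End EnumerateSet.

Lemma sum4_card_sets (F : {set {set V}}) : {in F, forall S : {set V}, #|S| = 4} ->
  sum4 (fun a b c d => distinct4 a b c d && ([set a; b; c; d] \in F)) = 24 * #|F|.
Proof.
move=> F4.
have split_F a b c d : (distinct4 a b c d && ([set a; b; c; d] \in F) : nat)
   = \sum_(S in F) (distinct4 a b c d && ([set a; b; c; d] == S)).
  case: (distinct4 a b c d); last by rewrite big1.
  case: (boolP ([set a; b; c; d] \in F)) => abcdF /=.
    by rewrite (bigD1 _ abcdF) /= eqxx big1 // => S /andP [_ /negbTE]; rewrite eq_sym => ->.
  by rewrite big1 // => S SF; case: eqP => // abcdS; rewrite abcdS SF in abcdF.
rewrite (eq_sum4 split_F) sum4_sum (eq_bigr (fun=> 24)) => [|S /F4]; last exact: sum4_enum_set.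
by rewrite sum_nat_const mulnC.
Qed.

End OrderedQuadruples.

Lemma leq_b2n_or4 (x a b c d : bool) : (x -> [|| a, b, c | d]) -> x <= a + b + c + d.
Proof. by case: x; case: a; case: b; case: c; case: d => // /(_ isT). Qed.

Section C3FreeHypergraph.
Variables (n : nat) (E : {set {set 'I_n}}).
Hypothesis C3free : ~ contains_C3 E.
Local Notation V := 'I_n.

Definition edge4 (a b c d : V) := [set a; b; c; d] \in E.

Lemma edge4_perm a b c d a' b' c' d' :
  perm_eq [:: a; b; c; d] [:: a'; b'; c'; d'] -> edge4 a b c d = edge4 a' b' c' d'.
Proof.
by move=> s; rewrite /edge4 !set4E; congr (_ \in E); apply/setP => x; rewrite !in_set (perm_mem s).
Qed.

Lemma edge4_swap a b c d : edge4 a b c d = edge4 c d a b.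
Proof. by apply: edge4_perm; perm4. Qed.
Lemma edge4_23 a b c d : edge4 a b c d = edge4 a c b d.
Proof. by apply: edge4_perm; perm4. Qed.
Lemma edge4_cyc a b c d : edge4 a b c d = edge4 a d b c.
Proof. by apply: edge4_perm; perm4. Qed.

Definition codeg (a b : V) := sum2 (fun c d => distinct4 a b c d && edge4 a b c d).

Lemma codeg_diag a : codeg a a = 0.
Proof. by rewrite /codeg /sum2 big1 // => c _; rewrite big1 // => d _; rewrite distinct4E eqxx. Qed.

Lemma sum4_edges : uniform4 E ->
  sum4 (fun a b c d => distinct4 a b c d && edge4 a b c d) = 24 * #|E|.
Proof. exact: sum4_card_sets. Qed.

Section Link.
Variables p q : V.
Hypothesis codeg_max : forall a b, codeg a b <= codeg p q.

Definition link (a b : V) := distinct4 p q a b && edge4 p q a b.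

Lemma link_neq a b : link a b -> a != b.
Proof. by case/andP; rewrite distinct4E => /and5P [_ _ _ _ /andP []]. Qed.

Lemma edge_across_link a b c d :
  distinct4 a b c d -> edge4 a b c d -> link a b -> link c d -> False.
Proof.
move=> abcd abcdE /andP [pqab pqabE] /andP [pqcd pqcdE]; apply: C3free.
by exists p, q, a, b, c, d; rewrite uniq6_of_distinct4.
Qed.

Definition defect a b c d :=
  (edge4 a b c d && ~~ link a b && ~~ link c d) || (~~ edge4 a b c d && (link a b != link c d)).

Lemma edge4_nondefect a b c d :
  distinct4 a b c d -> ~~ defect a b c d -> edge4 a b c d = link a b (+) link c d.
Proof.
move=> abcd; have := @edge_across_link a b c d abcd; rewrite /defect.
by case: (edge4 a b c d); case: (link a b); case: (link c d) => // H; exfalso; apply: H.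
Qed.

Definition ndefects := sum4 (fun a b c d => distinct4 a b c d && defect a b c d).
Definition npairs := n * (n - 1).

Lemma codeg_link : codeg p q = sum2 link.
Proof. by []. Qed.

Lemma codeg_le_npairs : codeg p q <= npairs.
Proof.
by rewrite /npairs -npairsE codeg_link; apply: leq_sum2 => a b; case: (boolP (link a b)) => // /link_neq ->.
Qed.

Lemma sum2_nonlink : sum2 (fun a b => (a != b) && ~~ link a b) = npairs - codeg p q.
Proof.
suff -> : npairs = codeg p q + sum2 (fun a b => (a != b) && ~~ link a b) by rewrite addKn.
rewrite /npairs -npairsE codeg_link -sum2D; apply: eq_sum2 => a b.
by case: (boolP (link a b)) => [/link_neq -> //|]; case: (a != b).
Qed.

(* With X the ordered edges whose pair ab lies outside the link and T the quadruples with
   ab in the link and cd outside it, both X and T are at most codeg p q * (npairs - codeg p q)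
   (the first by maximality of the codegree), while 2 * ndefects + 6 * #edges = 8 X + 4 T. *)
Lemma defects_edges_le :
  2 * ndefects + 6 * sum4 (fun a b c d => distinct4 a b c d && edge4 a b c d)
  <= 12 * (codeg p q * (npairs - codeg p q)).
Proof.
set K := codeg p q * (npairs - codeg p q).
set M := sum4 _.
set Y := sum4 (fun a b c d => distinct4 a b c d && edge4 a b c d && link a b).
set X := sum4 (fun a b c d => distinct4 a b c d && edge4 a b c d && ~~ link a b).
set Y' := sum4 (fun a b c d => distinct4 a b c d && edge4 a b c d && ~~ link a b && link c d).
set W := sum4 (fun a b c d => distinct4 a b c d && edge4 a b c d && ~~ link a b && ~~ link c d).
set Z1 := sum4 (fun a b c d => distinct4 a b c d && ~~ edge4 a b c d && link a b && ~~ link c d).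
set Z2 := sum4 (fun a b c d => distinct4 a b c d && ~~ edge4 a b c d && ~~ link a b && link c d).
set T := sum4 (fun a b c d => distinct4 a b c d && link a b && ~~ link c d).
have cross a b c d := @edge_across_link a b c d.
have eM : M = Y + X.
  rewrite -sum4D; apply: eq_sum4 => a b c d.
  by case: (distinct4 a b c d); case: (edge4 a b c d); case: (link a b).
have eY : Y = sum4 (fun a b c d => distinct4 a b c d && edge4 a b c d && link a b && ~~ link c d).
  apply: eq_sum4 => a b c d; have := cross a b c d.
  by case: (distinct4 a b c d); case: (edge4 a b c d); case: (link a b); case: (link c d) => // /(_ isT isT isT isT).
have eYY' : Y = Y'.
  rewrite eY sum4_swap; apply: eq_sum4 => a b c d; rewrite -distinct4_swap -edge4_swap.
  by case: (distinct4 a b c d); case: (edge4 a b c d); case: (link a b); case: (link c d).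
have eX : X = Y' + W.
  rewrite -sum4D; apply: eq_sum4 => a b c d.
  by case: (distinct4 a b c d); case: (edge4 a b c d); case: (link a b); case: (link c d).
have X_le : X <= K.
  have -> : X = sum2 (fun a b => ~~ link a b * codeg a b).
    rewrite /X -sum4_mull; apply: eq_sum4 => a b c d.
    by case: (distinct4 a b c d); case: (edge4 a b c d); case: (link a b).
  rewrite /K -sum2_nonlink -(sum2Ml (codeg p q)); apply: leq_sum2 => a b.
  case: (eqVneq a b) => [->|_]; first by rewrite codeg_diag muln0.
  by case: (link a b) => //=; rewrite mul1n muln1 codeg_max.
have eT : T = Z1 + Y.
  rewrite eY -sum4D; apply: eq_sum4 => a b c d.
  by case: (distinct4 a b c d); case: (edge4 a b c d); case: (link a b); case: (link c d).
have T_le : T <= K.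
  apply: (@leq_trans (sum4 (fun a b c d => link a b * ((c != d) && ~~ link c d)))).
    apply: leq_sum4 => a b c d; case: (boolP (distinct4 a b c d)) => //.
    rewrite distinct4E => /and5P [_ _ _ _ /andP [_ ->]].
    by case: (link a b); case: (link c d).
  by rewrite sum4_prod -codeg_link sum2_nonlink.
have eZ : Z2 = Z1.
  rewrite /Z2 sum4_swap; apply: eq_sum4 => a b c d; rewrite -distinct4_swap -edge4_swap.
  by case: (distinct4 a b c d); case: (edge4 a b c d); case: (link a b); case: (link c d).
have eD : ndefects = W + Z1 + Z2.
  rewrite -!sum4D; apply: eq_sum4 => a b c d; rewrite /defect.
  by case: (distinct4 a b c d); case: (edge4 a b c d); case: (link a b); case: (link c d).
lia.
Qed.

Lemma defects_edges_le_sq :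
  2 * ndefects + 6 * sum4 (fun a b c d => distinct4 a b c d && edge4 a b c d) <= 3 * npairs ^ 2.
Proof.
apply: leq_trans defects_edges_le _.
have := codeg_le_npairs; move: (codeg p q) npairs => x y xy.
have [z ->] : exists z, y = x + z by exists (y - x); lia.
rewrite addKn; case: (leqP x z) => [/subnKC <- | /ltnW /subnKC <-]; nia.
Qed.

Definition clean v u x y := [&& ~~ defect v u x y, ~~ defect v x u y & ~~ defect v y u x].

Definition link_parity v u y := link v u (+) link u y (+) link v y.

Lemma clean_link v u x y : distinct4 v u x y -> clean v u x y ->
  link x y = link v x (+) link v y (+) link_parity v u y /\
  link_parity v u x = link_parity v u y.
Proof.
move=> vuxy /and3P [c1 c2 c3].
have h1 := edge4_nondefect vuxy c1.
have h2 := edge4_nondefect (etrans (esym (distinct4_23 _ _ _ _)) vuxy) c2.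
have h3 := edge4_nondefect (etrans (esym (distinct4_cyc _ _ _ _)) vuxy) c3.
rewrite -edge4_23 in h2; rewrite -edge4_cyc in h3.
rewrite /link_parity; move: h1 h2 h3; case: (edge4 v u x y);
  by case: (link v u); case: (link x y); case: (link v x); case: (link u y); case: (link v y); case: (link u x).
Qed.

Lemma correct_of_clean v u a b c d : uniq [:: v; u; a; b; c; d] -> ~~ defect a b c d ->
  clean v u a b -> clean v u c d -> clean v u b d -> correct E [set x | link v x] [set a; b; c; d].
Proof.
move=> vuabcd nd Cab Ccd Cbd.
have abcd : distinct4 a b c d := mask_uniq vuabcd [:: false; false; true; true; true; true].
have vuab : distinct4 v u a b := mask_uniq vuabcd [:: true; true; true; true; false; false].
have vucd : distinct4 v u c d := mask_uniq vuabcd [:: true; true; false; false; true; true].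
have vubd : distinct4 v u b d := mask_uniq vuabcd [:: true; true; false; true; false; true].
have [lab _] := clean_link vuab Cab.
have [lcd _] := clean_link vucd Ccd.
have [_ pbd] := clean_link vubd Cbd.
rewrite /correct /good card_set4I // -/(edge4 a b c d) (edge4_nondefect abcd nd) lab lcd pbd /=.
by case: (link v a); case: (link v b); case: (link v c); case: (link v d); case: (link_parity v u d).
Qed.

Definition unclean_pairs v u := sum2 (fun x y => distinct4 v u x y && ~~ clean v u x y).

Lemma unclean_pairs_diag w : unclean_pairs w w = 0.
Proof. by rewrite /unclean_pairs /sum2 big1 // => x _; rewrite big1 // => y _; rewrite distinct4E eqxx. Qed.

Lemma sum2_unclean_pairs_le : sum2 unclean_pairs <= 3 * ndefects.
Proof.
apply: (@leq_trans (sum4 (fun a b c d => (distinct4 a b c d && defect a b c d)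
   + (distinct4 a c b d && defect a c b d) + (distinct4 a d b c && defect a d b c)))).
  apply: leq_sum4 => a b c d; rewrite (distinct4_23 a c b d) -(distinct4_cyc a b c d) /clean.
  by case: (distinct4 a b c d); case: (defect a b c d); case: (defect a c b d); case: (defect a d b c).
rewrite !sum4D -(sum4_23 (fun a b c d => distinct4 a b c d && defect a b c d)).
rewrite -(sum4_cyc (fun a b c d => distinct4 a b c d && defect a b c d)) -/ndefects; lia.
Qed.

Definition bad v u x y := (x != y) && ~~ (distinct4 v u x y && clean v u x y).

Lemma sum2_bad_le v u : v != u ->
  sum2 (bad v u) <= 4 * n + unclean_pairs v u.
Proof.
move=> vu.
have sum_hit : sum2 (fun x y => (x == v) + (x == u) + (y == v) + (y == u)) = 4 * n.
  have hit2 (w : V) : sum2 (fun _ y => y == w) = n.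
    rewrite /sum2 (eq_bigr (fun=> 1)) => [|x _]; first by rewrite sum_nat_const card_ord muln1.
    by rewrite (bigD1 w) //= eqxx big1 // => y /negbTE ->.
  have hit1 (w : V) : sum2 (fun x _ => x == w) = n by rewrite sum2_transpose hit2.
  by rewrite !sum2D !hit1 !hit2; lia.
rewrite -sum_hit -sum2D; apply: leq_sum2 => x y; rewrite /bad.
case: (boolP (distinct4 v u x y)) => vuxy; first by rewrite /=; lia.
case: (boolP (x != y)) => //= xy.
move: vuxy; rewrite distinct4E (negbTE vu) xy /= (eq_sym v x) (eq_sym v y) (eq_sym u x) (eq_sym u y).
by case: (x == v); case: (x == u); case: (y == v); case: (y == u).
Qed.

(* By [correct_of_clean], abcd can be incorrect for the partition by the link of v only if it
   is a defect or one of the pairs ab, cd, bd is bad for vu. *)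
Lemma sum4_incorrect_le v u : v != u ->
  sum4 (fun a b c d => distinct4 a b c d && ([set a; b; c; d] \in incorrect_sets E [set x | link v x]))
  <= ndefects + 3 * (n * n * sum2 (bad v u)).
Proof.
move=> vu.
apply: (@leq_trans (sum4 (fun a b c d => (distinct4 a b c d && defect a b c d)
   + bad v u a b + bad v u c d + bad v u b d))).
  apply: leq_sum4 => a b c d; apply: leq_b2n_or4 => /andP [abcd].
  rewrite inE abcd /= => /andP [_ inc].
  case: (boolP (defect a b c d)) => //= nd.
  case: (boolP (bad v u a b)) => //= Bab; case: (boolP (bad v u c d)) => //= Bcd.
  case: (boolP (bad v u b d)) => //= Bbd.
  move: (abcd); rewrite distinct4E => /and5P [ab _ _ _ /andP [bd cd]].
  move: Bab Bcd Bbd; rewrite /bad ab bd cd /= !negbK.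
  move=> /andP [vuab Cab] /andP [vucd Ccd] /andP [_ Cbd].
  by move: inc; rewrite (correct_of_clean (uniq6_of_distinct4 vuab vucd abcd) nd Cab Ccd Cbd).
have e_cd : sum4 (fun a b c d => bad v u c d) = sum4 (fun a b c d => bad v u a b).
  by rewrite sum4_swap.
have e_bd : sum4 (fun a b c d => bad v u b d) = sum4 (fun a b c d => bad v u a b).
  by rewrite sum4_23 sum4_swap.
rewrite !sum4D -/ndefects e_cd e_bd (sum4_const2 (bad v u)); lia.
Qed.

End Link.

Lemma exists_partition_few_incorrect : uniform4 E -> 1 < n ->
  exists V1 : {set V}, 48 * #|incorrect_sets E V1| + 2736 * #|E| <= 57 * n ^ 4 + 24 * n ^ 3.
Proof.
move=> E4 n_gt1.
have n_gt0 : 0 < n by apply: ltnW.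
have [[p q] _ pq_max] := @arg_maxnP _ (Ordinal n_gt0, Ordinal n_gt0) xpredT (fun t => codeg t.1 t.2) isT.
have codeg_max a b : codeg a b <= codeg p q by apply: (pq_max (a, b)).
have [v [u [vu avg_vu]]] :=
  exists_offdiag_le_avg (sum2_unclean_pairs_le p q) (unclean_pairs_diag p q) n_gt1.
exists [set x | link p q v x].
set inc := incorrect_sets E _.
have inc_count : sum4 (fun a b c d => distinct4 a b c d && ([set a; b; c; d] \in inc)) = 24 * #|inc|.
  by apply: sum4_card_sets => S; rewrite inE => /andP [/eqP].
have inc_le := sum4_incorrect_le p q vu.
have bad_le := sum2_bad_le p q vu.
have defects_le := defects_edges_le_sq codeg_max.
rewrite sum4_edges // /npairs in defects_le; rewrite inc_count in inc_le.
have unclean_le : n * n * unclean_pairs p q v u <= 6 * ndefects p q.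
  have n_sq_le : n * n <= 2 * (n * (n - 1)) by nia.
  by apply: leq_trans (leq_mul n_sq_le (leqnn _)) _; lia.
have npairs_sq : (n * (n - 1)) ^ 2 <= n ^ 4.
  by rewrite -[4]/(2 * 2) expnM leq_exp2r // expnS expn1 leq_mul2l leq_subr orbT.
have bad_sum : n * n * sum2 (bad p q v u) <= 4 * n ^ 3 + 6 * ndefects p q.
  have := leq_mul (leqnn (n * n)) bad_le; lia.
move: inc_le bad_sum defects_le npairs_sq.
move: (n * n * sum2 _) ((n * (n - 1)) ^ 2) (n ^ 4) (n ^ 3) => B P2 N4 N3.
lia.
Qed.

End C3FreeHypergraph.

Lemma few_incorrect_of_edge_deficit n (E : {set {set 'I_n}}) :
  uniform4 E -> ~ contains_C3 E -> 1 < n ->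
  exists V1, 48 * #|incorrect_sets E V1| + 2736 * #|E| <= 2736 * bmax n + 423 * n ^ 3.
Proof.
move=> E4 C3free n_gt1.
have [V1 few] := exists_partition_few_incorrect C3free E4 n_gt1.
exists V1; have := bmax_lb n; have : n ^ 2 <= n ^ 3 by rewrite leq_exp2l.
lia.
Qed.

Import Order.TTheory GRing.Theory Num.Theory.
Local Open Scope ring_scope.

Theorem theorem3 (R : realType) (eps : R) : 0 < eps ->
  exists eta : R, 0 < eta /\
  exists N : nat, forall n : nat, (N <= n)%N ->
  forall E : {set {set 'I_n}}, uniform4 E -> ~ contains_C3 E ->
    (bmax n)%:R - eta * n%:R ^+ 4 < #|E|%:R ->
    exists V1 : {set 'I_n}, #|incorrect_sets E V1|%:R <= eps * n%:R ^+ 4.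
Proof.
move=> eps_gt0; exists (eps / 114); split; first by rewrite divr_gt0.
exists (maxn 2 (Num.truncn (18 / eps)).+1) => n; rewrite geq_max => /andP [n_gt1 n_large].
move=> E E4 C3free many_edges.
have [V1 few] := few_incorrect_of_edge_deficit E4 C3free n_gt1; exists V1.
have {}few : 48 * #|incorrect_sets E V1|%:R + 2736 * #|E|%:R
    <= 2736 * (bmax n)%:R + 423 * n%:R ^+ 3 :> R.
  by rewrite -natrX -!natrM -!natrD ler_nat.
have : 18 / eps < n%:R by apply: lt_le_trans (truncnS_gt _) _; rewrite ler_nat.
rewrite ltr_pdivrMr // => n_eps.
have cube_small : 423 * n%:R ^+ 3 <= 24 * (eps * n%:R ^+ 4) :> R.
  have -> : 24 * (eps * n%:R ^+ 4) = 24 * (n%:R * eps) * n%:R ^+ 3 :> R by rewrite exprS; ring.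
  by rewrite ler_wpM2r ?exprn_ge0 ?ler0n //; lra.
move: few many_edges cube_small; rewrite mulrAC.
move: (eps * n%:R ^+ 4) => EX; lra.
Qed.
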